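(* Let $a_1,\dots,a_t$ be positive integers and $I=\langle x_1^{a_1},\dots,x_t^{a_t}\rangle\subset S=K[x_1,\dots,x_t]$. Then $v(I^{n+1})=v(I)+n\,\alpha(I)$ for all $n\ge 1$.
   Context: $K$ is a field and $S$ is standard graded. For a proper graded ideal $J$, the $v$-number is $v(J)=\min\{k\ge 0 : \exists f\in S_k,\ \mathcal P\in\operatorname{Ass}(S/J) \text{ with } (J:f)=\mathcal P\}$. $\alpha(I)=\min\{\deg f : f\in I\setminus\{0\} \text{ homogeneous}\}$. *)

From HB Require Import structures.
From mathcomp Require Import all_boot all_order all_algebra.
From mathcomp Require Import mpoly.
From Stdlib Require Import ClassicalEpsilon.

Set Implicit Arguments.
Unset Strict Implicit.
Unset Printing Implicit Defensive.

Import GRing.Theory.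
Local Open Scope ring_scope.

Definition is_ideal (R : comRingType) (I : R -> Prop) : Prop :=
  I 0 /\ (forall f g, I f -> I g -> I (f + g)) /\ (forall r f, I f -> I (r * f)).

Definition gen_ideal (R : comRingType) (G : R -> Prop) : R -> Prop :=
  fun f => exists s : seq (R * R),
    (forall p, p \in s -> G p.2) /\ f = \sum_(p <- s) p.1 * p.2.

Definition ideal_mul (R : comRingType) (I J : R -> Prop) : R -> Prop :=
  gen_ideal (fun h => exists f g, I f /\ J g /\ h = f * g).

Definition ideal_pow (R : comRingType) (I : R -> Prop) (n : nat) : R -> Prop :=
  iter n (ideal_mul I) (gen_ideal (fun h => h = 1)).

Definition colon (R : comRingType) (J : R -> Prop) (f : R) : R -> Prop :=
  fun g => J (g * f).

Definition same_ideal (R : comRingType) (I J : R -> Prop) : Prop :=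
  forall g, I g <-> J g.

Definition prime_ideal (R : comRingType) (P : R -> Prop) : Prop :=
  is_ideal P /\ ~ P 1 /\ (forall a b, P (a * b) -> P a \/ P b).

(* P \in Ass(R/J) : P is prime and P = (J : f) for some f *)
Definition ass_prime (R : comRingType) (J P : R -> Prop) : Prop :=
  prime_ideal P /\ exists f, same_ideal (colon J f) P.

(* least element of a set of naturals (chosen classically; meaningful when it exists) *)
Definition is_least (P : nat -> Prop) (k : nat) : Prop :=
  P k /\ forall j, P j -> (k <= j)%N.

Definition least (P : nat -> Prop) : nat :=
  epsilon (inhabits 0%N) (is_least P).

Definition vnumber_prop (K : fieldType) (t : nat) (J : {mpoly K[t]} -> Prop)
  (k : nat) : Prop :=
  exists f : {mpoly K[t]}, f \is k.-homog /\
    exists P, ass_prime J P /\ same_ideal (colon J f) P.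

Definition vnumber (K : fieldType) (t : nat) (J : {mpoly K[t]} -> Prop) : nat :=
  least (vnumber_prop J).

Definition alpha_prop (K : fieldType) (t : nat) (I : {mpoly K[t]} -> Prop)
  (k : nat) : Prop :=
  exists f : {mpoly K[t]}, I f /\ f != 0 /\ f \is k.-homog.

Definition alpha (K : fieldType) (t : nat) (I : {mpoly K[t]} -> Prop) : nat :=
  least (alpha_prop I).

Definition pure_power_ideal (K : fieldType) (t : nat) (a : 'I_t -> nat)
  : {mpoly K[t]} -> Prop :=
  gen_ideal (fun h => exists i : 'I_t, h = 'X_i ^+ a i).

(* A polynomial lies in I^N iff every monomial x^e of its support has
   sum_i floor(e_i / a_i) >= N.  Let a_j be the least exponent.  The monomial
   x^(a-1) x_j^((N-1) a_j), of degree sum_i (a_i - 1) + (N-1) a_j, has colon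
   (I^N : x^e) = (x_1, ..., x_t).  Conversely, if (I^N : f) is prime then it
   contains every x_i, so some monomial x^e of f is outside I^N while all the
   x_i x^e are in I^N; this forces e_i = -1 mod a_i for all i and
   sum_i floor(e_i / a_i) = N - 1, whence deg e >= sum_i (a_i - 1) + (N-1) a_j.
   So v(I^N) = sum_i (a_i - 1) + (N-1) a_j, while alpha(I) = a_j. *)

From mathcomp Require Import all_boot all_order all_algebra.
From mathcomp Require Import mpoly.
From mathcomp Require Import zify.
From Stdlib Require Import ClassicalEpsilon.

Set Implicit Arguments.
Unset Strict Implicit.
Unset Printing Implicit Defensive.

Import GRing.Theory.
Local Open Scope ring_scope.

Section Ideals.
Variable R : comRingType.
Implicit Types (G J Q : R -> Prop) (f g x : R).

Lemma gen_ideal0 G : gen_ideal G 0.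
Proof. by exists [::]; rewrite big_nil. Qed.

Lemma gen_idealD G f g : gen_ideal G f -> gen_ideal G g -> gen_ideal G (f + g).
Proof.
move=> [s [Gs ->]] [s' [Gs' ->]]; exists (s ++ s'); split; last by rewrite big_cat.
by move=> p; rewrite mem_cat => /orP [/Gs|/Gs'].
Qed.

Lemma gen_idealMl G r f : gen_ideal G f -> gen_ideal G (r * f).
Proof.
move=> [s [Gs ->]]; exists [seq (r * p.1, p.2) | p <- s]; split.
  by move=> p /mapP [q /Gs Gq ->].
by rewrite big_map mulr_sumr; apply: eq_bigr => p _; rewrite mulrA.
Qed.

Lemma mem_gen_ideal G f : G f -> gen_ideal G f.
Proof.
move=> Gf; exists [:: (1, f)]; split; last by rewrite big_seq1 mul1r.
by move=> p; rewrite inE => /eqP ->.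
Qed.

Lemma gen_ideal_is_ideal G : is_ideal (gen_ideal G).
Proof. by split; [|split]; [exact: gen_ideal0 | exact: gen_idealD | exact: gen_idealMl]. Qed.

Lemma ideal_sum J (T : eqType) (s : seq T) (h : T -> R) :
  is_ideal J -> (forall y, y \in s -> J (h y)) -> J (\sum_(y <- s) h y).
Proof.
move=> [J0 [JD _]]; elim: s => [|y s IHs] Jh; first by rewrite big_nil.
rewrite big_cons; apply: JD; first by apply: Jh; rewrite inE eqxx.
by apply: IHs => z zs; apply: Jh; rewrite inE zs orbT.
Qed.

Lemma gen_ideal_min G J f :
  is_ideal J -> (forall g, G g -> J g) -> gen_ideal G f -> J f.
Proof.
move=> idJ GJ [s [Gs ->]]; apply: ideal_sum => // p ps.
by case: idJ => _ [_ JM]; apply/JM/GJ/Gs.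
Qed.

Lemma ideal_pow0 J g : ideal_pow J 0 g.
Proof. by rewrite -[g]mulr1; apply/gen_idealMl/mem_gen_ideal. Qed.

Lemma prime_idealX Q x k : prime_ideal Q -> Q (x ^+ k) -> Q x.
Proof.
move=> [_ [notQ1 Qprime]]; elim: k => [|k IHk]; first by rewrite expr0.
by rewrite exprS => /Qprime [|/IHk].
Qed.

End Ideals.

Lemma least_eq (P : nat -> Prop) k : is_least P k -> least P = k.
Proof.
move=> [Pk Pmin]; rewrite /least.
have [Pl lmin] := epsilon_spec (inhabits 0%N) (is_least P) (ex_intro _ k (conj Pk Pmin)).
by apply/eqP; rewrite eqn_leq (lmin _ Pk) (Pmin _ Pl).
Qed.

Lemma mpolyX_splitU (R : nzRingType) t (e : 'X_{1..t}) i k : (k <= e i)%N ->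
  'X_[e] = ('X_i : {mpoly R[t]}) ^+ k * 'X_[e - U_(i) *+ k].
Proof.
move=> le_k_ei; rewrite mpolyXn -mpolyXD addmC submK //.
apply/mnm_lepP => j; rewrite mulmnE mnm1E.
by case: eqP => [<-|] /=; rewrite ?mul1n ?mul0n.
Qed.

Lemma mdeg_geU t (e : 'X_{1..t}) i : (e i <= mdeg e)%N.
Proof. by rewrite mdegE (bigD1 i) //= leq_addr. Qed.

Section PurePowerIdeal.
Variables (K : fieldType) (t : nat) (a : 'I_t -> nat).
Hypothesis a_gt0 : forall i, (0 < a i)%N.
Local Notation poly := {mpoly K[t]}.
Local Notation I := (pure_power_ideal (K:=K) a).
Implicit Types (e : 'X_{1..t}) (f g : poly) (N : nat).

(* The largest N with x^e in I^N. *)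
Definition adic_order e : nat := \sum_(i < t) e i %/ a i.

Definition adic_ge N g : Prop := forall e, e \in msupp g -> (N <= adic_order e)%N.

Lemma adic_orderD e1 e2 : (adic_order e1 + adic_order e2 <= adic_order (e1 + e2))%N.
Proof.
rewrite /adic_order -big_split /=; apply: leq_sum => i _.
by rewrite mnmDE divnD // leq_addr.
Qed.

Lemma adic_order_le e1 e2 : (e1 <= e2)%MM -> (adic_order e1 <= adic_order e2)%N.
Proof. by move=> /mnm_lepP le12; apply: leq_sum => i _; apply: leq_div2r. Qed.

Lemma adic_order_powU i k : adic_order (U_(i) *+ (k * a i)) = k.
Proof.
rewrite /adic_order (bigD1 i) //= big1 ?addn0.
  by rewrite mulmnE mnm1E eqxx mul1n mulnK.
by move=> j /negbTE; rewrite mulmnE mnm1E eq_sym => ->; rewrite mul0n div0n.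
Qed.

Lemma adic_orderU i e : adic_order (U_(i) + e) = ((a i %| (e i).+1) + adic_order e)%N.
Proof.
rewrite /adic_order (bigD1 i) //= [in RHS](bigD1 i) //= addnA -divnS //.
rewrite mnmDE mnm1E eqxx add1n; congr (_ + _)%N.
by apply: eq_bigr => j /negbTE nji; rewrite mnmDE mnm1E eq_sym nji.
Qed.

Lemma adic_order_subU e i : (a i <= e i)%N ->
  adic_order e = (adic_order (e - U_(i) *+ a i)).+1.
Proof.
move=> le_ai_ei; rewrite /adic_order (bigD1 i) //= [in RHS](bigD1 i) //= -addSn.
congr (_ + _)%N.
  rewrite mnmBE mulmnE mnm1E eqxx mul1n.
  by rewrite -{1}(subnK le_ai_ei) -{2}[a i]mul1n divnDMl // addn1.
by apply: eq_bigr => j /negbTE nji; rewrite mnmBE mulmnE mnm1E eq_sym nji mul0n subn0.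
Qed.

Lemma adic_order_gt0 e : (0 < adic_order e)%N -> exists i, (a i <= e i)%N.
Proof.
move=> ord_gt0; apply/existsP; apply: contraLR ord_gt0; rewrite negb_exists.
move=> /forallP small; rewrite -leqNgt leqn0; apply/eqP/big1 => i _.
by apply: divn_small; rewrite ltnNge small.
Qed.

Lemma adic_geX N e : adic_ge N 'X_[e] <-> (N <= adic_order e)%N.
Proof.
split; first by apply; rewrite msuppX inE.
by move=> le_N e'; rewrite msuppX inE => /eqP ->.
Qed.

Lemma adic_geM M N f g : adic_ge M f -> adic_ge N g -> adic_ge (M + N) (f * g).
Proof.
move=> fM gN e /msuppM_le /allpairsP [[e1 e2] [/= /fM le1 /gN le2 ->]].
exact: leq_trans (leq_add le1 le2) (adic_orderD e1 e2).
Qed.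

Lemma adic_ge_ideal N : is_ideal (adic_ge N).
Proof.
split; first by move=> e; rewrite msupp0.
split; first by move=> f g fN gN e /msuppD_le; rewrite mem_cat => /orP [/fN|/gN].
by move=> r f fN; rewrite -[N]add0n; apply: adic_geM.
Qed.

Lemma adic_ge_min N (J : poly -> Prop) g : is_ideal J ->
  (forall e, (N <= adic_order e)%N -> J 'X_[e]) -> adic_ge N g -> J g.
Proof.
move=> idJ JX gN; rewrite [g]mpolyE; apply: ideal_sum => // e eg.
by rewrite -mul_mpolyC; case: idJ => _ [_ JM]; apply/JM/JX/gN.
Qed.

Lemma adic_ge_powX N i : adic_ge N ('X_i ^+ (N * a i)).
Proof. by rewrite mpolyXn; apply/adic_geX; rewrite adic_order_powU. Qed.

Lemma pure_power_idealE g : I g <-> adic_ge 1 g.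
Proof.
split.
  apply: gen_ideal_min; first exact: adic_ge_ideal.
  by move=> _ [i ->]; rewrite -[a i]mul1n; apply: adic_ge_powX.
apply: adic_ge_min; first exact: gen_ideal_is_ideal.
move=> e /adic_order_gt0 [i le_ai_ei]; rewrite (mpolyX_splitU _ le_ai_ei) mulrC.
by apply/gen_idealMl/mem_gen_ideal; exists i.
Qed.

Lemma ideal_pow_pure_powerE N g : ideal_pow I N g <-> adic_ge N g.
Proof.
elim: N g => [|N IHN] g.
  by split=> _; [move=> e _ | apply: ideal_pow0].
split.
  apply: gen_ideal_min; first exact: adic_ge_ideal.
  move=> _ [f [h [If [INh ->]]]]; rewrite -add1n.
  exact: adic_geM (proj1 (pure_power_idealE f) If) (proj1 (IHN h) INh).
apply: adic_ge_min; first exact: gen_ideal_is_ideal.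
move=> e le_N_e; have [i le_ai_ei] := adic_order_gt0 (leq_trans (ltn0Sn N) le_N_e).
rewrite (mpolyX_splitU _ le_ai_ei); apply: mem_gen_ideal.
exists ('X_i ^+ a i), 'X_[e - U_(i) *+ a i]; split; last split => //.
  by apply/pure_power_idealE; rewrite -[a i]mul1n; apply: adic_ge_powX.
by apply/IHN/adic_geX; rewrite -ltnS -adic_order_subU.
Qed.

(* The homogeneous maximal ideal (x_1, ..., x_t), as the polynomials without constant term. *)
Definition irrelevant_ideal g : Prop := g@_0 = 0.

Lemma irrelevant_ideal_prime : prime_ideal irrelevant_ideal.
Proof.
have mcoeff0M := (mcoeff0_is_multiplicative t K).1.
split; first split; first exact: mcoeff0.
  split; first by move=> f g f0 g0; rewrite /irrelevant_ideal mcoeffD f0 g0 addr0.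
  by move=> r f f0; rewrite /irrelevant_ideal mcoeff0M f0 mulr0.
split; first by rewrite /irrelevant_ideal mcoeff1 eqxx; apply/eqP; exact: oner_neq0.
move=> f g; rewrite /irrelevant_ideal mcoeff0M => /eqP; rewrite mulf_eq0.
by case/orP => /eqP; [left | right].
Qed.

Section MinimalExponent.
Variable j : 'I_t.
Hypothesis a_min : forall i, (a j <= a i)%N.

Lemma alpha_pure_power : alpha I = a j.
Proof.
apply: least_eq; split.
  exists ('X_j ^+ a j); split.
    by apply/pure_power_idealE; rewrite -[a j]mul1n; apply: adic_ge_powX.
  rewrite mpolyXn dhomogX; split; last by apply/eqP; rewrite /= mdegMn mdeg1 mul1n.
  by apply/eqP => X0; have := msuppX K (U_(j) *+ a j); rewrite X0 msupp0.
move=> k [f [If [f_neq0 f_homog]]]; have lead_supp := mlead_supp f_neq0.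
have [i le_ai] := adic_order_gt0 (proj1 (pure_power_idealE f) If _ lead_supp).
rewrite -(dhomogP _ _ _ f_homog _ lead_supp).
exact: leq_trans (a_min i) (leq_trans le_ai (mdeg_geU _ i)).
Qed.

Definition socle_degree : nat := \sum_(i < t) (a i).-1.

Definition vwitness N : 'X_{1..t} :=
  [multinom ((i == j) * N.-1 * a i + (a i).-1)%N | i < t].

Lemma mdeg_vwitness N : mdeg (vwitness N) = (socle_degree + N.-1 * a j)%N.
Proof.
rewrite mdegE; under eq_bigr => i _ do rewrite mnmE.
rewrite big_split /= addnC; congr (_ + _)%N.
by rewrite (bigD1 j) //= eqxx mul1n big1 ?addn0 // => i /negbTE ->.
Qed.

Lemma adic_order_vwitness N : adic_order (vwitness N) = N.-1.
Proof.
rewrite /adic_order; under eq_bigr => i _ do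
  rewrite mnmE divnMDl // divn_small ?ltn_predL // addn0.
by rewrite (bigD1 j) //= eqxx mul1n big1 ?addn0 // => i /negbTE ->.
Qed.

Lemma dvdn_vwitnessS N i : (a i %| (vwitness N i).+1)%N.
Proof.
by rewrite mnmE -addnS prednK // dvdn_addr ?dvdn_mull ?dvdnn.
Qed.

Lemma adic_order_vwitnessD N d : (0 < N)%N ->
  (N <= adic_order (vwitness N + d))%N = (d != 0%MM).
Proof.
move=> N_gt0; have [-> | d_neq0] /= := eqVneq d 0%MM.
  by rewrite addm0 adic_order_vwitness; lia.
have [i di_gt0] : exists i, (0 < d i)%N.
  apply/existsP; apply: contraNT d_neq0 => /existsPn d0.
  by apply/eqP/mnmP => i; rewrite mnm0E; apply/eqP; rewrite -leqn0 leqNgt d0.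
apply: leq_trans (adic_order_le (_ : (U_(i) + vwitness N <= vwitness N + d)%MM)).
  by rewrite adic_orderU dvdn_vwitnessS adic_order_vwitness; lia.
by apply/mnm_lepP => k; rewrite !mnmDE addnC leq_add2l mnm1E; case: eqP => [<-|].
Qed.

Lemma colon_vwitness N (J : poly -> Prop) : (0 < N)%N ->
  (forall g, J g <-> adic_ge N g) ->
  same_ideal (colon J 'X_[vwitness N]) irrelevant_ideal.
Proof.
move=> N_gt0 JE g; rewrite /colon /irrelevant_ideal JE.
have msuppE := perm_mem (msuppMX g (vwitness N)).
split=> [gwN | g0 e].
  apply/eqP; rewrite mcoeff_eq0; apply/negP => supp0.
  suff : 0%MM != 0%MM :> 'X_{1..t} by rewrite eqxx.
  rewrite -(adic_order_vwitnessD _ N_gt0); apply: gwN.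
  by rewrite msuppE; apply/mapP; exists 0%MM.
rewrite msuppE => /mapP [d dg ->]; rewrite adic_order_vwitnessD //.
by apply: contraTneq dg => ->; rewrite -mcoeff_eq0 g0.
Qed.

Lemma vnumber_prop_vwitness N (J : poly -> Prop) : (0 < N)%N ->
  (forall g, J g <-> adic_ge N g) -> vnumber_prop J (socle_degree + N.-1 * a j).
Proof.
move=> N_gt0 JE; have colonE := colon_vwitness N_gt0 JE.
exists 'X_[vwitness N]; split; first by rewrite dhomogX /= mdeg_vwitness.
exists irrelevant_ideal; split=> //; split; first exact: irrelevant_ideal_prime.
by exists 'X_[vwitness N].
Qed.

(* Each x_i x^e gains one in adic_order, so a_i divides e_i + 1 and adic_order e = N - 1. *)
Lemma mdeg_adic_boundary N e : (adic_order e < N)%N ->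
  (forall i, N <= adic_order (U_(i) + e))%N -> (socle_degree + N.-1 * a j <= mdeg e)%N.
Proof.
move=> lt_e_N ge_Ue.
have dvd_eS i : (a i %| (e i).+1)%N.
  by have := ge_Ue i; rewrite adic_orderU; case: (_ %| _)%N; lia.
have order_e : adic_order e = N.-1.
  by have := ge_Ue j; rewrite adic_orderU dvd_eS; lia.
have eE i : e i = (e i %/ a i * a i + (a i).-1)%N.
  have := divnK (dvd_eS i); rewrite divnS // dvd_eS; have := a_gt0 i; nia.
rewrite mdegE (eq_bigr _ (fun i _ => eE i)) big_split /= addnC leq_add2r.
rewrite -order_e /adic_order big_distrl /=.
by apply: leq_sum => i _; rewrite leq_mul2l a_min orbT.
Qed.

Lemma vnumber_prop_ge N (J : poly -> Prop) k : (forall g, J g <-> adic_ge N g) ->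
  vnumber_prop J k -> (socle_degree + N.-1 * a j <= k)%N.
Proof.
move=> JE [f [f_homog [Q [[Q_prime _] colonE]]]].
have Jf_not : ~ adic_ge N f.
  by move=> /JE Jf; apply: Q_prime.2.1; apply/colonE; rewrite /colon mul1r.
have JXf i : adic_ge N ('X_i * f).
  apply/JE/colonE; apply: (prime_idealX (k := N * a i)) Q_prime _.
  by apply/colonE/JE; rewrite mulrC; apply: (adic_ge_ideal N).2.2; apply: adic_ge_powX.
have /allPn [e ef] : ~~ all (fun e => N <= adic_order e)%N (msupp f).
  by apply/negP => /allP; exact: Jf_not.
rewrite -ltnNge -(dhomogP _ _ _ f_homog e ef) => lt_e_N.
apply: mdeg_adic_boundary lt_e_N _ => i; apply: JXf.
by rewrite mulrC (perm_mem (msuppMX f _)); apply/mapP; exists e.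
Qed.

Lemma vnumber_adic_ge N (J : poly -> Prop) : (0 < N)%N ->
  (forall g, J g <-> adic_ge N g) -> vnumber J = (socle_degree + N.-1 * a j)%N.
Proof.
move=> N_gt0 JE; apply: least_eq; split; first exact: vnumber_prop_vwitness.
by move=> k; apply: vnumber_prop_ge.
Qed.

End MinimalExponent.
End PurePowerIdeal.

Theorem proposition4p13 (K : fieldType) (t : nat) (a : 'I_t -> nat)
  (ht : (0 < t)%N) (ha : forall i, (0 < a i)%N) (n : nat) (hn : (1 <= n)%N) :
  vnumber (ideal_pow (@pure_power_ideal K t a) n.+1)
  = (vnumber (@pure_power_ideal K t a) + n * alpha (@pure_power_ideal K t a))%N.
Proof.
(* The identity holds for n = 0 as well. *)
have [j _ a_min] := arg_minnP a (isT : predT (Ordinal ht)).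
have {}a_min i : (a j <= a i)%N := a_min i isT.
rewrite (vnumber_adic_ge ha a_min (ltn0Sn n) (ideal_pow_pure_powerE (K := K) ha n.+1)).
rewrite (vnumber_adic_ge ha a_min (ltn0Sn 0) (pure_power_idealE (K := K) ha)).
by rewrite (alpha_pure_power K ha a_min) mul0n addn0.
Qed.
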